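(* Let $n\ge1$, $p\in\mathbb N$ with $p\ge1$, $q\in\mathbb Z$ with $p+q\ge1$, and let $A=\{a_1^{p+q},a_2^{2p+q},\ldots,a_n^{np+q}\}$ (the linear multiset, $k_i=pi+q$). Let $s=\min(m,pn+q)$ and let $\Lambda_m(A)$ be the set of tuples $(\lambda_1,\ldots,\lambda_s)$ of non-negative integers with $\sum_{i=1}^s i\lambda_i=m$ and $\sum_{i=j}^s\lambda_i\le\overline{k_j}$ for $j=1,\ldots,s$. Then $$|C_m(A)|=\sum_{\lambda\in\Lambda_m(A)}\prod_{j=1}^s\binom{\left\lfloor n-\max\!\left(1,\frac{j-q}{p}\right)\right\rfloor+1-\sum_{i=j+1}^s\lambda_i}{\lambda_j}.$$ Moreover, if $m\le n$, then $$|C_m(A)|=\sum_{\substack{\lambda_1+2\lambda_2+\cdots+s\lambda_s=m\\ \lambda_i\in\mathbb Z_{\ge0}}}\prod_{j=1}^s\binom{\left\lfloor n-\max\!\left(1,\frac{j-q}{p}\right)\right\rfloor+1-\sum_{i=j+1}^s\lambda_i}{\lambda_j},$$ the sum running over all non-negative integer solutions.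
   Context: A multiset $A=\{a_1^{k_1},\ldots,a_n^{k_n}\}$ consists of distinct elements $a_1,\ldots,a_n$ with positive integer multiplicities $k_1,\ldots,k_n$. A submultiset of $A$ is a multiset $\{a_1^{r_1},\ldots,a_n^{r_n}\}$ with integers $0\le r_i\le k_i$, of cardinality $r_1+\cdots+r_n$. $C_m(A)$ denotes the set of all submultisets of $A$ of cardinality $m$. For each integer $j\ge1$, $\overline{k_j}=|\{i\in\{1,\ldots,n\}: k_i\ge j\}|$. *)

From mathcomp Require Import all_boot all_order all_algebra.
Set Implicit Arguments. Unset Strict Implicit. Unset Printing Implicit Defensive.
Import Order.TTheory GRing.Theory Num.Theory.
Local Open Scope ring_scope.

(* A multiset {a_1^{k_1},...,a_n^{k_n}} is encoded by its multiplicity function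
   k : 'I_n -> nat (index i : 'I_n stands for a_{i+1}).  A submultiset
   {a_1^{r_1},...,a_n^{r_n}} is a function r with 0 <= r_i <= k_i; it is
   represented as a finite function with values bounded by max_i k_i. *)
Definition maxmult (n : nat) (k : 'I_n -> nat) : nat := (\max_(i < n) k i)%N.

Definition Cm_set (n : nat) (k : 'I_n -> nat) (m : nat) :
  {set {ffun 'I_n -> 'I_(maxmult k).+1}} :=
  [set r : {ffun 'I_n -> 'I_(maxmult k).+1} | [forall i, (r i <= k i)%N] && ((\sum_(i < n) (r i : nat))%N == m)].

Definition card_Cm (n : nat) (k : 'I_n -> nat) (m : nat) : nat := #|Cm_set k m|.

Definition kbar (n : nat) (k : 'I_n -> nat) (j : nat) : nat :=
  #|[set i : 'I_n | (j <= k i)%N]|.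

Definition lin_mult (n p : nat) (q : int) : 'I_n -> nat :=
  fun i => absz (p%:Z * (i.+1)%:Z + q).

Arguments lin_mult : clear implicits.

Definition s_param (n p : nat) (q : int) (m : nat) : nat :=
  minn m (absz (p%:Z * n%:Z + q)).

(* A tuple (lambda_1,...,lambda_s) is L : {ffun 'I_s -> 'I_m.+1},
   with lambda_{j+1} = L j  (each lambda_i <= m is forced by sum i lambda_i = m). *)
Definition wsum (s m : nat) (L : {ffun 'I_s -> 'I_m.+1}) : nat :=
  (\sum_(i < s) i.+1 * L i)%N.

Definition in_Lambda (n : nat) (k : 'I_n -> nat) (s m : nat)
  (L : {ffun 'I_s -> 'I_m.+1}) : bool :=
  (wsum L == m) &&
  [forall j : 'I_s, ((\sum_(i < s | (j <= i)%N) (L i : nat))%N <= kbar k j.+1)%N].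

Definition binz (t : int) (k : nat) : int :=
  if 0 <= t then ('C(absz t, k))%:Z
  else (-1) ^+ k * ('C((k + absz t).-1, k))%:Z.

Definition top (n p : nat) (q : int) (s m : nat) (L : {ffun 'I_s -> 'I_m.+1})
  (j0 : 'I_s) : int :=
  Num.floor (n%:R - Num.max 1 (((j0.+1)%:R - q%:~R) / p%:R) : rat) + 1
  - (\sum_(i < s | (j0 < i)%N) (L i : nat))%N%:Z.

From mathcomp Require Import all_boot all_order all_algebra.
From mathcomp Require Import zify lra.
Set Implicit Arguments. Unset Strict Implicit. Unset Printing Implicit Defensive.
Import Order.TTheory GRing.Theory Num.Theory.

(* A submultiset r of A = {a_1^{k_1}, ..., a_n^{k_n}} of cardinality m is
   sorted by its profile lambda, where lambda_j counts the elements taken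
   exactly j times; the profiles that occur are exactly Lambda_m(A).  A
   submultiset with profile lambda is the same as a decreasing chain of level
   sets Y_s \subset ... \subset Y_1, where Y_j = {i | j <= r_i} must lie in
   K_j = {i | j <= k_i} (of size \overline{k_j}) and have size
   t_j = lambda_j + ... + lambda_s.  Choosing the chain from the top down gives
   prod_j binom(\overline{k_j} - t_{j+1}, lambda_j) choices (section
   LevelChains, then Profile); this is the general formula card_Cm_profiles.
   For the linear multiset k_i = p i + q, \overline{k_j} equals
   floor(n - max(1, (j - q)/p)) + 1 (kbar_lin), which yields the first
   formula; when m <= n the constraints of Lambda_m(A) hold automatically
   because k_i >= i (in_Lambda_small), which yields the second one. *)

Lemma card_set_indicator (T : finType) (P : pred T) :
  #|[set x | P x]| = \sum_x (P x : nat).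
Proof.
by rewrite -sum1_card big_mkcond /=; apply: eq_bigr => x _; rewrite inE; case: (P x).
Qed.

Lemma sum_indicator_value s v (P : pred nat) (F : nat -> nat) : v <= s ->
  \sum_(i < s | P i) F i * (v == i.+1) = if (0 < v) && P v.-1 then F v.-1 else 0.
Proof.
case: v => [|u] hu /=; first by rewrite big1 // => i _; rewrite muln0.
rewrite big_mkcond (bigD1 (Ordinal hu)) //= big1 ?addn0.
  by case: (P u); rewrite ?eqxx ?muln1.
move=> i iu; case: (P i) => //.
have /negbTE -> : u.+1 != i.+1 by rewrite eqSS eq_sym.
by rewrite muln0.
Qed.

Lemma card_upper_level (T : finType) (r : T -> nat) s l :
  (forall x, r x <= s) -> 0 < l ->
  #|[set x | l <= r x]| = \sum_(i < s | l <= i.+1) #|[set x | r x == i.+1]|.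
Proof.
move=> hr hl; rewrite card_set_indicator.
under [in RHS]eq_bigr => i _ do rewrite card_set_indicator.
rewrite exchange_big /=; apply: eq_bigr => x _.
under eq_bigr => i _ do rewrite -[(_ == _ : nat)]mul1n.
rewrite (sum_indicator_value (fun i => l <= i.+1) (fun _ => 1) (hr x)).
by case: (r x) hl => [|u] /=; [case: l | case: (l <= u.+1)].
Qed.

Lemma sum_by_levels (T : finType) (r : T -> nat) s : (forall x, r x <= s) ->
  \sum_x r x = \sum_(i < s) i.+1 * #|[set x | r x == i.+1]|.
Proof.
move=> hr.
under [in RHS]eq_bigr => i _ do rewrite card_set_indicator big_distrr.
rewrite exchange_big /=; apply: eq_bigr => x _.
by rewrite (sum_indicator_value xpredT (fun i => i.+1) (hr x)); case: (r x).
Qed.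

Lemma card_intermediate_sets (T : finType) (X B : {set T}) c :
  X \subset B -> #|X| <= c ->
  #|[set Y : {set T} | (X \subset Y) && (Y \subset B) && (#|Y| == c)]| =
  'C(#|B| - #|X|, c - #|X|).
Proof.
move=> XB Xc.
have -> : #|B| - #|X| = #|B :\: X| by rewrite cardsD (setIidPr XB).
rewrite -cards_draws.
have inj : {in [set Z : {set T} | Z \subset B :\: X & #|Z| == c - #|X|] &,
             injective (fun Z => Z :|: X)}.
  move=> Z1 Z2; rewrite !inE => /andP [h1 _] /andP [h2 _] /setP e.
  apply/setP => x; move: (e x); rewrite !inE.
  case xX: (x \in X); last by rewrite !orbF.
  have n1 : x \notin Z1 by apply/negP => /(subsetP h1); rewrite inE xX.
  have n2 : x \notin Z2 by apply/negP => /(subsetP h2); rewrite inE xX.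
  by rewrite (negbTE n1) (negbTE n2).
rewrite -(card_in_imset inj); apply: eq_card => Y; rewrite !inE.
apply/idP/imsetP.
  move=> /andP [/andP [XY YB] /eqP cY]; exists (Y :\: X).
    by rewrite inE setSD //= cardsD (setIidPr XY) cY.
  apply/setP => x; rewrite !inE; case xX: (x \in X); last by rewrite orbF.
  by rewrite (subsetP XY).
move=> [Z]; rewrite inE => /andP [ZB /eqP cZ] ->.
have ZBX : Z \subset B by apply: subset_trans ZB (subsetDl _ _).
have dZ : [disjoint Z & X].
  by rewrite disjoints_subset (subset_trans ZB) // setDE subsetIr.
by rewrite subsetUr subUset ZBX XB cardsU (disjoint_setI0 dZ) cards0 subn0 cZ subnK ?eqxx.
Qed.

Section LevelChains.
Variables (T : finType) (B : nat) (k : T -> nat) (t : nat -> nat).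
Local Notation FT := {ffun T -> 'I_B.+1}.

Definition level (r : FT) (l : nat) : {set T} := [set i | l <= r i].
Definition klevel (l : nat) : {set T} := [set i | l <= k i].

Definition admissible (j : nat) (X : {set T}) (r : FT) : bool :=
  [&& [forall i, (r i <= j) && (r i <= k i)], X \subset level r j &
      all (fun l => #|level r l| == t l) (iota 1 j)].

Definition count_adm (j : nat) (X : {set T}) : nat := #|[set r | admissible j X r]|.

Definition extensions (j : nat) (X : {set T}) : {set {set T}} :=
  [set Y : {set T} | (X \subset Y) && (Y \subset klevel j) && (#|Y| == t j)].

Lemma count_adm0 X : count_adm 0 X = 1.
Proof.
rewrite /count_adm (_ : [set r | admissible 0 X r] = [set [ffun => ord0]]) ?cards1 //.
apply/setP => r; rewrite !inE /admissible /= andbT.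
apply/andP/eqP => [[/forallP r0 _] | ->].
  by apply/ffunP => i; apply/val_inj; rewrite ffunE /=; case/andP: (r0 i); rewrite leqn0 => /eqP.
split; first by apply/forallP => i; rewrite ffunE.
by apply/subsetP => i; rewrite inE.
Qed.

(* The top level of a height-(j+1) function is cut off by truncating at j and
   restored by raising a set Y of points to height j+1. *)
Definition trunc (j : nat) (r : FT) : FT := [ffun i => inord (minn (r i) j)].
Definition raise (j : nat) (Y : {set T}) (r : FT) : FT :=
  [ffun i => if i \in Y then inord j.+1 else r i].

Lemma truncE j (r : FT) i : (trunc j r i : nat) = minn (r i) j.
Proof. by rewrite ffunE inordK // ltnS (leq_trans (geq_minl _ _)) // -ltnS. Qed.

Lemma raiseE j (Y : {set T}) (r : FT) i : j < B ->
  (raise j Y r i : nat) = if i \in Y then j.+1 else r i.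
Proof. by move=> jB; rewrite ffunE; case: (i \in Y); rewrite ?inordK. Qed.

Lemma level_trunc j (r : FT) l : l <= j -> level (trunc j r) l = level r l.
Proof. by move=> lj; apply/setP => i; rewrite !inE truncE leq_min lj andbT. Qed.

Lemma level_raise_low j (Y : {set T}) (r : FT) l : j < B -> l <= j -> Y \subset level r j ->
  level (raise j Y r) l = level r l.
Proof.
move=> jB lj Yr; apply/setP => i; rewrite !inE raiseE //; case iY: (i \in Y) => //.
have := subsetP Yr i iY; rewrite inE => jr.
by rewrite (leq_trans lj jr) (leq_trans lj).
Qed.

Lemma level_raise_top j (Y : {set T}) (r : FT) : j < B -> (forall i, r i <= j) ->
  level (raise j Y r) j.+1 = Y.
Proof.
move=> jB rj; apply/setP => i; rewrite inE raiseE //.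
by case: (i \in Y); rewrite ?leqnn // ltnNge rj.
Qed.

Lemma trunc_raise j (Y : {set T}) (r : FT) : j < B -> admissible j Y r ->
  trunc j (raise j Y r) = r.
Proof.
move=> jB /and3P [/forallP rb /subsetP Yr _]; apply/ffunP => i; apply/val_inj => /=.
have /andP [rj _] := rb i; rewrite truncE raiseE //; case iY: (i \in Y).
  have := Yr i iY; rewrite inE => jr.
  by rewrite (minn_idPr (leqnSn j)); apply/eqP; rewrite eqn_leq rj jr.
exact/minn_idPl.
Qed.

Lemma raise_trunc j (r : FT) : j < B -> (forall i, r i <= j.+1) ->
  raise j (level r j.+1) (trunc j r) = r.
Proof.
move=> jB rb; apply/ffunP => i; apply/val_inj => /=; rewrite raiseE // inE truncE.
case: (leqP j.+1 (r i)) => h; first by apply/eqP; rewrite eqn_leq h rb.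
by apply/minn_idPl; rewrite -ltnS.
Qed.

Lemma trunc_admissible j X (r : FT) : admissible j.+1 X r ->
  admissible j (level r j.+1) (trunc j r).
Proof.
move=> /and3P [/forallP rb _ /allP rt]; apply/and3P; split.
- apply/forallP => i; rewrite truncE geq_minr /=.
  by case/andP: (rb i) => _; apply: leq_trans (geq_minl _ _).
- by apply/subsetP => i; rewrite !inE truncE leq_min leqnn andbT => /ltnW.
- apply/allP => l; rewrite mem_iota => /andP [l1 lj].
  by rewrite level_trunc; [apply: rt; rewrite mem_iota | ]; lia.
Qed.

Lemma level_extension j X (r : FT) : admissible j.+1 X r ->
  level r j.+1 \in extensions j.+1 X.
Proof.
move=> /and3P [/forallP rb Xr /allP rt]; rewrite inE Xr /=; apply/andP; split.
  by apply/subsetP => i; rewrite !inE => h; case/andP: (rb i) => _; apply: leq_trans h.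
by apply: rt; rewrite mem_iota; lia.
Qed.

Lemma raise_admissible j X (Y : {set T}) (r : FT) : j < B -> Y \in extensions j.+1 X ->
  admissible j Y r -> admissible j.+1 X (raise j Y r).
Proof.
move=> jB; rewrite inE => /andP [/andP [XY /subsetP YK] /eqP tY].
move=> /and3P [/forallP rb Yr /allP rt].
have rj i : r i <= j by case/andP: (rb i).
apply/and3P; split; last apply/allP => l; rewrite ?level_raise_top //.
- apply/forallP => i; rewrite raiseE //; case iY: (i \in Y).
    by rewrite leqnn; have := YK i iY; rewrite inE.
  by case/andP: (rb i) => h1 ->; rewrite (leq_trans h1).
- rewrite mem_iota => /andP [l1 lj].
  case: (ltngtP l j.+1) => hl; last by rewrite hl level_raise_top // tY.
    have lj' : l <= j by lia.
    by rewrite level_raise_low //; apply: rt; rewrite mem_iota; lia.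
  by lia.
Qed.

(* Peeling off the top level: an admissible function of height j+1 over X is
   the same as a choice of its top level Y together with an admissible
   function of height j over Y. *)
Lemma count_adm_rec j X : j < B ->
  count_adm j.+1 X = \sum_(Y in extensions j.+1 X) count_adm j Y.
Proof.
move=> jB; rewrite /count_adm -sum1dep_card.
rewrite (partition_big (level^~ j.+1) (mem (extensions j.+1 X))) /=; last first.
  by move=> r; apply: level_extension.
apply: eq_bigr => Y hY; rewrite sum1dep_card.
have inj : {in [set r | admissible j Y r] &, injective (raise j Y)}.
  by apply: (can_in_inj (g := trunc j)) => r; rewrite inE; apply: trunc_raise.
rewrite -(card_in_imset inj); apply: eq_card => r; rewrite inE.
apply/andP/imsetP => [[hr /eqP <-] | [r' hr' ->]].
  exists (trunc j r); first by rewrite inE (trunc_admissible hr).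
  by rewrite raise_trunc // => i; case/and3P: hr => /forallP /(_ i) /andP [].
rewrite inE in hr'; split; first exact: raise_admissible.
by rewrite level_raise_top // => i; case/and3P: hr' => /forallP /(_ i) /andP [].
Qed.

(* Choosing the level sets top-down: each step picks t l - t (l+1) new points
   of klevel l outside the level above. *)
Lemma count_adm_prod j (X : {set T}) : j <= B -> (forall l, t l.+1 <= t l) ->
  X \subset klevel j.+1 -> #|X| = t j.+1 ->
  count_adm j X = \prod_(l < j) 'C(#|klevel l.+1| - t l.+2, t l.+1 - t l.+2).
Proof.
move=> + tdec; elim: j X => [|j IH] X jB XK cX; first by rewrite count_adm0 big_ord0.
rewrite count_adm_rec //.
rewrite (eq_bigr (fun _ => \prod_(l < j) 'C(#|klevel l.+1| - t l.+2, t l.+1 - t l.+2))); last first.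
  by move=> Y; rewrite inE -andbA => /and3P [_ YK /eqP cY]; apply: IH => //; apply: ltnW.
rewrite sum_nat_const big_ord_recr /= mulnC; congr (_ * _).
have XK' : X \subset klevel j.+1.
  by apply: (subset_trans XK); apply/subsetP => i; rewrite !inE; apply: ltnW.
by rewrite /extensions card_intermediate_sets // cX.
Qed.

End LevelChains.

Definition suffix_sum s (a : 'I_s -> nat) (l : nat) : nat := \sum_(i < s | l <= i.+1) a i.

Lemma suffix_sum_split s (a : 'I_s -> nat) (i : 'I_s) :
  suffix_sum a i.+1 = a i + suffix_sum a i.+2.
Proof.
rewrite /suffix_sum (bigD1 i) /= ?leqnn //; congr (_ + _); apply: eq_bigl => j.
by rewrite !ltnS ltn_neqAle eq_sym andbC.
Qed.

Lemma suffix_sum_decr s (a : 'I_s -> nat) l : suffix_sum a l.+1 <= suffix_sum a l.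
Proof.
rewrite /suffix_sum big_mkcond [X in _ <= X]big_mkcond; apply: leq_sum => i _.
by case: ifP => // h; rewrite (leq_trans (leqnSn l) h).
Qed.

Lemma suffix_sum_inj s (a b : 'I_s -> nat) :
  (forall l, 0 < l -> l <= s -> suffix_sum a l = suffix_sum b l) -> a =1 b.
Proof.
move=> h i; have := h i.+1 isT (ltn_ord i); rewrite !suffix_sum_split.
have [lt|ge] := ltnP i.+1 s; first by rewrite (h i.+2 isT lt); apply: addIn.
by rewrite /suffix_sum !big1 ?addn0 // => j; rewrite !ltnS => hj; have := ltn_ord j; lia.
Qed.

Section Profile.
Variables (n : nat) (k : 'I_n -> nat) (m s : nat).
Local Notation FT := {ffun 'I_n -> 'I_(maxmult k).+1}.
Local Notation tails L := (suffix_sum (fun j : 'I_s => (L j : nat))).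

Hypothesis k_m_s : forall i, minn (k i) m <= s.

Definition profile (r : FT) : {ffun 'I_s -> 'I_m.+1} :=
  [ffun j : 'I_s => inord #|[set i | (r i : nat) == j.+1]|].

Lemma Cm_bound (r : FT) : r \in Cm_set k m -> forall i, r i <= s.
Proof.
rewrite inE => /andP [/forallP hk /eqP hsum] i.
by apply: leq_trans (k_m_s i); rewrite leq_min hk -hsum (bigD1 i) //= leq_addr.
Qed.

(* Each count in a profile is at most m, so the cast into 'I_m.+1 is exact. *)
Lemma profileE (r : FT) : r \in Cm_set k m ->
  forall j : 'I_s, (profile r j : nat) = #|[set i | (r i : nat) == j.+1]|.
Proof.
move=> hr j; rewrite ffunE inordK // ltnS.
move: (hr); rewrite inE => /andP [_ /eqP <-].
rewrite (sum_by_levels (Cm_bound hr)) (bigD1 j) //=.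
by apply: leq_trans (leq_addr _ _); apply: leq_pmull.
Qed.

Lemma level_profile (r : FT) l : r \in Cm_set k m -> 0 < l ->
  #|level r l| = tails (profile r) l.
Proof.
move=> hr l0; rewrite (card_upper_level (Cm_bound hr) l0).
by apply: eq_bigr => j _; rewrite profileE.
Qed.

Lemma profile_in_Lambda (r : FT) : r \in Cm_set k m -> in_Lambda k (profile r).
Proof.
move=> hr; move: (hr); rewrite inE => /andP [/forallP hk /eqP hsum].
apply/andP; split.
  rewrite /wsum; under eq_bigr => j _ do rewrite (profileE hr j).
  by rewrite -(sum_by_levels (Cm_bound hr)) hsum.
apply/forallP => j; rewrite -[X in X <= _]/(tails (profile r) j.+1) -level_profile //.
by apply: subset_leq_card; apply/subsetP => x; rewrite !inE => h; apply: leq_trans h (hk x).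
Qed.

Lemma profile_fibre (L : {ffun 'I_s -> 'I_m.+1}) : in_Lambda k L ->
  [set r | (r \in Cm_set k m) && (profile r == L)] =
  [set r | admissible k (tails L) s set0 r].
Proof.
move=> /andP [/eqP hw _]; apply/setP => r; rewrite [LHS]inE [RHS]inE; apply/andP/idP.
  move=> [hr /eqP <-]; have hb := Cm_bound hr.
  move: (hr); rewrite inE => /andP [/forallP hk _].
  apply/and3P; split; first by apply/forallP => i; rewrite hb hk.
    exact: sub0set.
  by apply/allP => l; rewrite mem_iota => /andP [l1 _]; rewrite level_profile.
move=> /and3P [/forallP h1 _ /allP h3].
have hb i : r i <= s by case/andP: (h1 i).
have counts : forall i : 'I_s, #|[set x | (r x : nat) == i.+1]| = L i.
  apply: suffix_sum_inj => l l0 ls; rewrite /suffix_sum -(card_upper_level hb l0); apply/eqP.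
  by apply: h3; rewrite mem_iota; lia.
have inC : r \in Cm_set k m.
  rewrite inE; apply/andP; split; first by apply/forallP => i; case/andP: (h1 i).
  by rewrite (sum_by_levels hb) -hw /wsum; apply/eqP/eq_bigr => i _; rewrite counts.
split=> //; apply/eqP/ffunP => j; apply/val_inj.
by rewrite /= (profileE inC) counts.
Qed.

Theorem card_Cm_profiles : s <= maxmult k ->
  card_Cm k m = \sum_(L : {ffun 'I_s -> 'I_m.+1} | in_Lambda k L)
      \prod_(j < s) 'C(kbar k j.+1 - \sum_(i < s | j < i) (L i : nat), L j).
Proof.
move=> sB.
rewrite /card_Cm -sum1_card (partition_big profile (@in_Lambda _ k s m)); last first.
  by move=> r; apply: profile_in_Lambda.
apply: eq_bigr => L HL; rewrite sum1dep_card profile_fibre //.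
rewrite -[LHS]/(count_adm (maxmult k) k _ s set0) count_adm_prod //; last first.
- by rewrite cards0 /suffix_sum big1 // => i; rewrite ltnS leqNgt ltn_ord.
- exact: sub0set.
- by move=> l; apply: suffix_sum_decr.
by apply: eq_bigr => l _; rewrite suffix_sum_split addnK.
Qed.

End Profile.

Lemma card_ord_ge n a : #|[set i : 'I_n | a <= i]| = n - a.
Proof.
rewrite card_set_indicator; elim: n => [|n IH]; first by rewrite big_ord0.
by rewrite big_ord_recr /= IH; case: (leqP a n) => h /=; lia.
Qed.

Lemma kbar_dominating n (k : 'I_n -> nat) j : (forall i : 'I_n, i < k i) ->
  n - j <= kbar k j.+1.
Proof.
move=> kdom; rewrite -card_ord_ge; apply: subset_leq_card; apply/subsetP => i.
by rewrite !inE => ji; apply: leq_ltn_trans ji (kdom i).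
Qed.

Lemma suffix_weight_le s m (L : {ffun 'I_s -> 'I_m.+1}) (j : 'I_s) :
  j.+1 * (\sum_(i < s | j <= i) (L i : nat)) <= wsum L.
Proof.
rewrite /wsum big_distrr /= big_mkcond [X in _ <= X]big_mkcond /=.
by apply: leq_sum => i _; case: ifP => // ji; rewrite leq_mul2r ltnS ji orbT.
Qed.

Lemma in_Lambda_small n (k : 'I_n -> nat) s m (L : {ffun 'I_s -> 'I_m.+1}) :
  (forall i : 'I_n, i < k i) -> m <= n -> in_Lambda k L = (wsum L == m).
Proof.
move=> kdom mn; rewrite /in_Lambda; case hw: (wsum L == m) => //=.
have arith a b : a.+1 * b <= n -> b <= n - a.
  by case: b => [|b] // h; have := leq_pmulr a (ltn0Sn b); lia.
apply/forallP => j; apply: leq_trans (kbar_dominating j kdom); apply: arith.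
by apply: leq_trans (suffix_weight_le L j) _; rewrite (eqP hw).
Qed.

Local Open Scope ring_scope.

Lemma card_ord_floor n (x : rat) : 1 <= x -> x <= n%:R ->
  (#|[set i : 'I_n | x <= (i.+1)%:R]|)%:Z = Num.floor (n%:R - x) + 1.
Proof.
move=> x1 xn; set f := Num.floor (n%:R - x).
have f0 : 0 <= f by rewrite floor_ge0 subr_ge0.
have fn : f < n%:Z by rewrite floor_lt_int -pmulrn; lra.
rewrite (eq_card (B := [set i : 'I_n | (n - 1 - absz f <= i)%N])); last first.
  move=> i; rewrite !inE.
  have -> : (x <= (i.+1)%:R) = (((n%:Z - (i.+1)%:Z))%:~R <= n%:R - x).
    by rewrite intrB !pmulrn; apply/idP/idP => h; lra.
  by rewrite -floor_ge_int -/f; apply/idP/idP => h; lia.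
by rewrite card_ord_ge; lia.
Qed.

Lemma lin_mult_ge n p q (i : 'I_n) j : (1 <= p)%N -> 1 <= p%:Z + q ->
  (j <= lin_mult n p q i)%N = ((j%:R - q%:~R) / p%:R <= (i.+1)%:R :> rat).
Proof.
move=> p1 pq; have pR : (0 : rat) < p%:R by rewrite ltr0n.
rewrite ler_pdivrMr // !pmulrn -intrB -intrM ler_int /lin_mult.
by apply/idP/idP => h; lia.
Qed.

Lemma kbar_lin n p q j : (1 <= n)%N -> (1 <= p)%N -> 1 <= p%:Z + q -> (1 <= j)%N ->
  j%:Z <= p%:Z * n%:Z + q ->
  (kbar (lin_mult n p q) j)%:Z =
  Num.floor (n%:R - Num.max 1 ((j%:R - q%:~R) / p%:R) : rat) + 1.
Proof.
move=> n1 p1 pq j1 jN; set y := (j%:R - q%:~R) / p%:R : rat.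
have pR : (0 : rat) < p%:R by rewrite ltr0n.
rewrite -card_ord_floor ?le_max ?lexx //; last first.
  by rewrite ge_max ler1n n1 ler_pdivrMr // !pmulrn -intrB -intrM ler_int; lia.
congr Posz; apply: eq_card => i; rewrite !inE lin_mult_ge // ge_max.
by rewrite ler1n.
Qed.

Section LinearMultiset.
Variables (n p : nat) (q : int).
Hypotheses (n_ge1 : (1 <= n)%N) (p_ge1 : (1 <= p)%N) (pq_ge1 : 1 <= p%:Z + q).
Local Notation k := (lin_mult n p q).

Lemma lin_mult_le_top (i : 'I_n) : (k i <= absz (p%:Z * n%:Z + q)%R)%N.
Proof. by rewrite /lin_mult; have := ltn_ord i; nia. Qed.

Lemma lin_mult_dominating (i : 'I_n) : (i < k i)%N.
Proof. by rewrite /lin_mult; nia. Qed.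

Lemma s_param_le_maxmult m : (s_param n p q m <= maxmult k)%N.
Proof.
have hn : (n.-1 < n)%N by rewrite prednK.
apply: leq_trans (leq_bigmax (Ordinal hn)).
by rewrite /lin_mult /s_param /= prednK // geq_minr.
Qed.

Lemma top_lin m (L : {ffun 'I_(s_param n p q m) -> 'I_m.+1}) (j : 'I_(s_param n p q m)) :
  in_Lambda k L ->
  top n p q L j = (kbar k j.+1 - \sum_(i < s_param n p q m | (j < i)%N) (L i : nat))%N%:Z.
Proof.
have jN : (j.+1)%:Z <= p%:Z * n%:Z + q.
  by have := ltn_ord j; have := leq_pmulr p n_ge1; rewrite /s_param; lia.
move=> /andP [_ /forallP /(_ j) hL].
have hsuf : (\sum_(i < s_param n p q m | (j < i)%N) (L i : nat) <= kbar k j.+1)%N.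
  by apply: leq_trans hL; apply: (suffix_sum_decr (fun i => (L i : nat)) j.+1).
by rewrite /top -kbar_lin ?subzn.
Qed.

Lemma card_Cm_lin m :
  (card_Cm k m)%:Z =
  \sum_(L : {ffun 'I_(s_param n p q m) -> 'I_m.+1} | in_Lambda k L)
     \prod_(j < s_param n p q m) binz (top n p q L j) (L j).
Proof.
have k_m_s i : (minn (k i) m <= s_param n p q m)%N.
  by have := lin_mult_le_top i; rewrite /s_param; lia.
rewrite (card_Cm_profiles k_m_s (s_param_le_maxmult m)) -natz natr_sum.
apply: eq_bigr => L HL; rewrite natr_prod; apply: eq_bigr => j _.
by rewrite top_lin // /binz le0z_nat natz.
Qed.

End LinearMultiset.

Theorem theorem4p4 (n p : nat) (q : int) (m : nat) :
  (1 <= n)%N -> (1 <= p)%N -> 1 <= p%:Z + q ->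
  ((card_Cm (lin_mult n p q) m)%:Z =
     \sum_(L : {ffun 'I_(s_param n p q m) -> 'I_m.+1}
             | in_Lambda (lin_mult n p q) L)
        \prod_(j < s_param n p q m) binz (top n p q L j) (L j))
  /\
  ((m <= n)%N ->
   (card_Cm (lin_mult n p q) m)%:Z =
     \sum_(L : {ffun 'I_(s_param n p q m) -> 'I_m.+1} | wsum L == m)
        \prod_(j < s_param n p q m) binz (top n p q L j) (L j)).
Proof.
move=> n1 p1 pq; split => [|mn]; first exact: card_Cm_lin.
rewrite card_Cm_lin //; apply: eq_bigl => L.
by apply: in_Lambda_small => // i; apply: lin_mult_dominating.
Qed.
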